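(* Let $t\geq 2$, $n\geq 1$ be integers and let $P$ be a finite poset with the unique cover twin property (UCTP) having at least three elements. If $\mathcal{F}\subseteq[t]^n$ is induced $P$-saturated, then every coordinate $i\in[n]$ is separating for $\mathcal{F}$.
   Context: For positive integers $n,t$, $[n]=\{1,\dots,n\}$ and $[t]^n$ is the set of functions $f:[n]\to[t]$, partially ordered by $f\leq g$ iff $f(i)\leq g(i)$ for all $i$. An induced copy of $P$ in $\mathcal{F}\subseteq[t]^n$ is an injective map $\phi:P\to\mathcal{F}$ with $\phi(x)\leq\phi(y)$ iff $x\leq_P y$. $\mathcal{F}$ is induced $P$-free if it contains no induced copy of $P$, and induced $P$-saturated if it is induced $P$-free and for every $f\in[t]^n\setminus\mathcal{F}$, $\mathcal{F}\cup\{f\}$ contains an induced copy of $P$. For $f\in[t]^n$, $D_i(f)\in[t]^{n-1}$ is obtained by deleting coordinate $i$: $D_i(f)(x)=f(x)$ for $x<i$, $D_i(f)(x)=f(x+1)$ for $i\leq x\leq n-1$. Coordinate $i$ is separating for $\mathcal{F}$ if there exist distinct $f,f'\in\mathcal{F}$ with $D_i(f)\leq D_i(f')$ and $f(i)>f'(i)$. In a poset $P$, $x$ covers $y\neq x$ if $y\leq_P x$ and no $z\in P\setminus\{x,y\}$ satisfies $y\leq_P z\leq_P x$. $P$ has the UCTP if whenever $x$ covers $y$, there exists $y'\in P\setminus\{x,y\}$ such that $x$ covers $y'$. *)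

From mathcomp Require Import all_boot all_order.
Set Implicit Arguments. Unset Strict Implicit. Unset Printing Implicit Defensive.
Import Order.Theory.

(* [t]^n is modelled as {ffun 'I_n -> 'I_t} (values 0..t-1 instead of 1..t,
   coordinates 0..n-1 instead of 1..n); order is pointwise. *)


Definition gle (n t : nat) (f g : {ffun 'I_n -> 'I_t}) : bool :=
  [forall i, f i <= g i].

Definition induced_copy d (P : finPOrderType d) (n t : nat)
  (F : {set {ffun 'I_n -> 'I_t}}) (phi : P -> {ffun 'I_n -> 'I_t}) : Prop :=
  injective phi /\ (forall x, phi x \in F) /\
  (forall x y, gle (phi x) (phi y) = (x <= y)%O).

Definition has_induced_copy d (P : finPOrderType d) (n t : nat)
  (F : {set {ffun 'I_n -> 'I_t}}) : Prop :=
  exists phi : P -> {ffun 'I_n -> 'I_t}, @induced_copy d P n t F phi.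

Definition induced_free d (P : finPOrderType d) (n t : nat)
  (F : {set {ffun 'I_n -> 'I_t}}) : Prop := ~ @has_induced_copy d P n t F.

Definition induced_saturated d (P : finPOrderType d) (n t : nat)
  (F : {set {ffun 'I_n -> 'I_t}}) : Prop :=
  @induced_free d P n t F /\
  (forall f : {ffun 'I_n -> 'I_t}, f \notin F -> @has_induced_copy d P n t (f |: F)).

(* deletion of coordinate i: D i f x = f x for x < i, f (x+1) for x >= i *)
Definition del (n t : nat) (i : 'I_n) (f : {ffun 'I_n -> 'I_t})
  : {ffun 'I_n.-1 -> 'I_t} :=
  [ffun x : 'I_n.-1 => f (insubd i (bump i x))].

Definition separating (n t : nat) (F : {set {ffun 'I_n -> 'I_t}}) (i : 'I_n)
  : Prop :=
  exists f f', [/\ f \in F, f' \in F, f != f',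
                   gle (del i f) (del i f') & (f' i < f i)%N].

Definition covers d (P : porderType d) (x y : P) : Prop :=
  y != x /\ (y <= x)%O /\
  ~ (exists z, [/\ z != x, z != y, (y <= z)%O & (z <= x)%O]).

Definition UCTP d (P : porderType d) : Prop :=
  forall x y : P, covers x y ->
    exists y' : P, [/\ y' != x, y' != y & covers x y'].

From mathcomp Require Import all_boot all_order.

Set Implicit Arguments. Unset Strict Implicit. Unset Printing Implicit Defensive.
Import Order.Theory.

(* If coordinate [i] is not separating, the value at [i] is monotone on F
   along the order of the remaining coordinates.  Pick f in F maximal in its
   level {h in F | h i = f i} and raise f i by one (or, when f i = t - 1,
   pick f minimal and lower f i by one).  Monotonicity keeps the resulting g
   out of F and makes it a twin of f: every other member of F compares with g
   exactly as with f.  An induced copy of P in F + g must then use both f and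
   g, and their preimages are two comparable elements of P with the same
   elements below them, which the UCTP forbids. *)

Section Cube.
Variables n t : nat.
Implicit Types f g h : {ffun 'I_n -> 'I_t}.

Lemma delE (i : 'I_n) f x : del i f x = f (lift i x).
Proof.
rewrite /del ffunE; congr (f _); apply: val_inj.
by rewrite val_insubd /=; have /= -> := ltn_ord (lift i x).
Qed.

Lemma gle_refl f : gle f f.
Proof. exact/forallP. Qed.

Lemma gle_del i f g : gle f g = gle (del i f) (del i g) && (f i <= g i).
Proof.
apply/forallP/andP => [le_fg | [/forallP le_del le_i] j].
  by split; [apply/forallP => x; rewrite !delE | ].
by case: (unliftP i j) => [x ->|->] //; move: (le_del x); rewrite !delE.
Qed.

Lemma gle_eq_of_sum f g :
  gle f g -> \sum_j (g j : nat) <= \sum_j (f j : nat) -> f = g.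
Proof.
move=> /forallP le_fg le_sum.
have sum_fg := @leqif_sum _ xpredT _ _ _ (fun j _ => leqif_eq (le_fg j)).
have /forallP eq_fg : [forall (j | xpredT j), f j == g j :> nat].
  by rewrite -sum_fg.2 eqn_leq sum_fg.1.
by apply/ffunP => j; apply/val_inj/eqP/eq_fg.
Qed.

Definition set_coord i f (v : 'I_t) : {ffun 'I_n -> 'I_t} :=
  [ffun j => if j == i then v else f j].

Lemma set_coord_at i f v : set_coord i f v i = v.
Proof. by rewrite ffunE eqxx. Qed.

Lemma del_set_coord i f v : del i (set_coord i f v) = del i f.
Proof. by apply/ffunP => x; rewrite !delE ffunE eq_sym (negbTE (neq_lift i x)). Qed.

End Cube.

(* b covers a, since anything strictly between would lie below a; a second
   element covered by b would also lie below a, hence not be covered by b. *)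
Lemma UCTP_no_lower_twins d (P : porderType d) (a b : P) :
  UCTP P -> a != b -> (a <= b)%O ->
  ~ (forall z, z != a -> z != b -> (z <= a)%O = (z <= b)%O).
Proof.
move=> U ab le_ab twins.
have cov_ba : covers b a.
  do 2!split=> //; case=> z [zb za le_az le_zb].
  rewrite -(twins z za zb) in le_zb.
  by move: za; rewrite (@le_anti _ _ z a) ?eqxx // le_az le_zb.
have [a' [a'b a'a [_ [le_a'b no_between]]]] := U b a cov_ba.
by apply: no_between; exists a; split=> //; [rewrite eq_sym | rewrite twins].
Qed.

Definition twin_in n t (F : {set {ffun 'I_n -> 'I_t}}) (f g : {ffun 'I_n -> 'I_t}) :=
  forall h, h \in F -> h != f -> gle h g = gle h f /\ gle g h = gle f h.

Lemma has_induced_copy_replace d (P : finPOrderType d) n t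
    (F : {set {ffun 'I_n -> 'I_t}}) (phi : P -> {ffun 'I_n -> 'I_t}) x f :
  injective phi -> (forall y z, gle (phi y) (phi z) = (y <= z)%O) ->
  f \in F -> (forall z, z != x -> phi z \in F) -> (forall z, phi z != f) ->
  (forall z, z != x -> gle (phi z) f = (z <= x)%O /\ gle f (phi z) = (x <= z)%O) ->
  has_induced_copy P F.
Proof.
move=> inj ord fF phiF phi_f swap.
exists (fun z => if z == x then f else phi z); split; last split.
- move=> y z; case: (eqVneq y x) => [->|yx]; case: (eqVneq z x) => [->|zx] //.
  + by move=> E; case/eqP: (phi_f z).
  + by move=> E; case/eqP: (phi_f y).
  + exact: inj.
- by move=> z; case: (eqVneq z x) => // /phiF.
- move=> y z; case: (eqVneq y x) => [->|yx]; case: (eqVneq z x) => [->|zx].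
  + by rewrite gle_refl lexx.
  + exact: (swap z zx).2.
  + exact: (swap y yx).1.
  + exact: ord.
Qed.

Section Saturated.
Variables (n t : nat) (d : Order.disp_t) (P : finPOrderType d)
  (F : {set {ffun 'I_n -> 'I_t}}).
Hypothesis satF : induced_saturated P F.

Lemma saturated_nonempty : 0 < t -> 1 < #|P| -> exists f, f \in F.
Proof.
move=> t_gt0 P_gt1; case: (set_0Vmem F) => [F0|[f fF]]; last by exists f.
pose g : {ffun 'I_n -> 'I_t} := [ffun => Ordinal t_gt0].
have gF : g \notin F by rewrite F0 inE.
have [phi [inj [phiF _]]] := satF.2 g gF.
have [a [b [_ _ /negP[]]]] := card_gt1P P_gt1.
apply/eqP/inj; move: (phiF a) (phiF b).
by rewrite F0 setU0 !inE => /eqP -> /eqP ->.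
Qed.

Lemma saturated_no_comparable_twin f g :
  UCTP P -> f \in F -> g \notin F -> twin_in F f g -> gle f g || gle g f -> False.
Proof.
move=> U fF gF tw cmp; have [freeF extF] := satF.
have [phi [inj [phiFg ord]]] := extF g gF.
have phiF z : phi z != g -> phi z \in F.
  by move=> zg; move: (phiFg z); rewrite in_setU1 (negbTE zg).
have [x phix] : exists x, phi x = g.
  case: (pickP (fun x => phi x == g)) => [x /eqP|no_g]; first by exists x.
  by case: freeF; exists phi; do 2!split=> //; move=> z; apply: phiF; rewrite no_g.
have phiF' z : z != x -> phi z \in F.
  by move=> zx; apply: phiF; rewrite -phix (inj_eq inj).
have [y phiy] : exists y, phi y = f.
  case: (pickP (fun y => phi y == f)) => [y /eqP|no_f]; first by exists y.
  case: freeF; apply: (has_induced_copy_replace inj ord fF phiF') => [z|z zx].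
    by rewrite no_f.
  have zf : phi z != f by rewrite no_f.
  by rewrite -!ord phix; have [-> ->] := tw _ (phiF' z zx) zf.
have yx : y != x by apply: contraNneq gF => yx; rewrite -phix -yx phiy.
have twins z : z != y -> z != x -> (z <= y)%O = (z <= x)%O.
  move=> zy zx; have zf : phi z != f by rewrite -phiy (inj_eq inj).
  by rewrite -!ord phiy phix (tw _ (phiF' z zx) zf).1.
move: cmp; rewrite -phiy -phix !ord => /orP[le_yx|le_xy].
  exact: (UCTP_no_lower_twins U yx le_yx twins).
by apply: (UCTP_no_lower_twins U _ le_xy) => [|z zx zy]; rewrite ?twins // eq_sym.
Qed.

End Saturated.

Definition coord_monotone n t (F : {set {ffun 'I_n -> 'I_t}}) (i : 'I_n) :=
  forall h k, h \in F -> k \in F -> h != k -> gle (del i h) (del i k) -> h i <= k i.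

Lemma separating_or_monotone n t (F : {set {ffun 'I_n -> 'I_t}}) i :
  separating F i \/ coord_monotone F i.
Proof.
case: (boolP [exists f, exists f', [&& f \in F, f' \in F, f != f',
                                       gle (del i f) (del i f') & f' i < f i]]).
  by case/existsP => f /existsP[f' /and5P[]]; left; exists f, f'.
move/existsPn => not_sep; right => h k hF kF hk le_hk; rewrite leqNgt.
by apply/negP => lt_kh; case/existsP: (not_sep h); exists k; rewrite hF kF hk le_hk.
Qed.

Section Monotone.
Variables (n t : nat) (F : {set {ffun 'I_n -> 'I_t}}) (i : 'I_n).
Hypothesis monoF : coord_monotone F i.
Implicit Types f g h : {ffun 'I_n -> 'I_t}.

Lemma set_coord_notin f v : f \in F -> v != f i -> set_coord i f v \notin F.
Proof.
move=> fF vf; apply/negP => gF.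
have gf : set_coord i f v != f.
  by apply: contraNneq vf => gf; rewrite -gf set_coord_at.
have := monoF gF fF gf; have := monoF fF gF; rewrite eq_sym gf.
rewrite del_set_coord gle_refl set_coord_at => le_fv le_vf.
by move: vf; rewrite -val_eqE eqn_leq le_fv ?le_vf.
Qed.

Lemma set_coord_twin f (v : 'I_t) : f \in F ->
  (forall h, h \in F -> h != f -> gle (del i h) (del i f) -> h i <= v) ->
  (forall h, h \in F -> h != f -> gle (del i f) (del i h) -> v <= h i) ->
  twin_in F f (set_coord i f v).
Proof.
move=> fF below above h hF hf.
have fh : f != h by rewrite eq_sym.
rewrite !(gle_del i) del_set_coord set_coord_at; split.
  by case: (boolP (gle _ _)) => //= le_hf; rewrite below // monoF.
by case: (boolP (gle _ _)) => //= le_fh; rewrite above // monoF.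
Qed.

Lemma level_max f0 : f0 \in F -> exists f,
  [/\ f \in F, f i = f0 i & forall h, h \in F -> h i = f i -> gle f h -> h = f].
Proof.
move=> f0F; pose level := [pred h | (h \in F) && (h i == f0 i)].
have f0_level : level f0 by rewrite /= f0F eqxx.
case: (arg_maxnP (fun h => \sum_j (h j : nat)) f0_level) => f /andP[fF /eqP fi] fmax.
exists f; split=> // h hF hi le_fh; apply/esym/gle_eq_of_sum => //.
by apply: fmax; rewrite /= hF hi fi eqxx.
Qed.

Lemma level_min f0 : f0 \in F -> exists f,
  [/\ f \in F, f i = f0 i & forall h, h \in F -> h i = f i -> gle h f -> h = f].
Proof.
move=> f0F; pose level := [pred h | (h \in F) && (h i == f0 i)].
have f0_level : level f0 by rewrite /= f0F eqxx.
case: (arg_minnP (fun h => \sum_j (h j : nat)) f0_level) => f /andP[fF /eqP fi] fmin.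
exists f; split=> // h hF hi le_hf; apply: gle_eq_of_sum => //.
by apply: fmin; rewrite /= hF hi fi eqxx.
Qed.

Lemma twin_above f (v : 'I_t) : f \in F ->
  (forall h, h \in F -> h i = f i -> gle f h -> h = f) -> v = (f i).+1 :> nat ->
  twin_in F f (set_coord i f v).
Proof.
move=> fF fmax fv; apply: set_coord_twin => // h hF hf le_hf.
  by rewrite fv; apply/leqW/monoF.
have fh : f != h by rewrite eq_sym.
rewrite fv ltn_neqAle monoF // andbT; apply: contra hf => /eqP fh_i.
apply/eqP/fmax => //; first by apply/val_inj; rewrite /= fh_i.
by rewrite (gle_del i) le_hf fh_i leqnn.
Qed.

Lemma twin_below f (v : 'I_t) : f \in F ->
  (forall h, h \in F -> h i = f i -> gle h f -> h = f) -> v.+1 = f i :> nat ->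
  twin_in F f (set_coord i f v).
Proof.
move=> fF fmin fv; apply: set_coord_twin => // h hF hf le_del; last first.
  have fh : f != h by rewrite eq_sym.
  by rewrite -ltnS fv; apply/leqW/monoF.
rewrite -ltnS fv ltn_neqAle monoF // andbT; apply: contra hf => /eqP hf_i.
apply/eqP/fmin => //; first by apply/val_inj; rewrite /= hf_i.
by rewrite (gle_del i) le_del hf_i leqnn.
Qed.

Lemma monotone_twin_exists f0 : 1 < t -> f0 \in F ->
  exists f g, [/\ f \in F, g \notin F, twin_in F f g & gle f g || gle g f].
Proof.
move=> t_gt1 f0F.
suff [f [v [fF vf tw]]] : exists f v,
    [/\ f \in F, v != f i & twin_in F f (set_coord i f v)].
  exists f, (set_coord i f v); split; rewrite ?set_coord_notin //.
  by rewrite !(gle_del i) del_set_coord gle_refl set_coord_at leq_total.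
case: (ltnP (f0 i).+1 t) => [lt_f0t | le_tf0].
  have [f [fF fi fmax]] := level_max f0F.
  have lt_ft : (f i).+1 < t by rewrite fi.
  exists f, (Ordinal lt_ft); split=> //; last by apply: twin_above.
  by rewrite -val_eqE /= gtn_eqF.
have [f [fF fi fmin]] := level_min f0F.
have f_gt0 : 0 < f i by rewrite fi -ltnS (leq_trans t_gt1).
have lt_ft : (f i).-1 < t by rewrite (leq_ltn_trans (leq_pred _)).
exists f, (Ordinal lt_ft); split=> //; last by apply: twin_below; rewrite //= prednK.
by rewrite -val_eqE /= ltn_eqF ?ltn_predL.
Qed.

End Monotone.

Theorem mainTheorem9 (n t : nat) (d : Order.disp_t) (P : finPOrderType d)
  (F : {set {ffun 'I_n -> 'I_t}}) :
  2 <= t -> 1 <= n -> @UCTP d P -> 3 <= #|P| ->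
  @induced_saturated d P n t F ->
  forall i : 'I_n, separating F i.
Proof.
move=> t_gt1 _ U P_gt2 satF i.
have [//|monoF] := separating_or_monotone F i.
have [f0 f0F] := saturated_nonempty satF (ltnW t_gt1) (ltnW P_gt2).
have [f [g [fF gF tw cmp]]] := monotone_twin_exists monoF t_gt1 f0F.
by case: (saturated_no_comparable_twin satF U fF gF tw cmp).
Qed.
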